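(* For any DRC-semigroup $S$, the category $\mathcal C(S)$ is a biordered category under the orders $\le_l,\le_r$ defined by $a\le_l b\iff a=pb$ for some $p\in\mathbf P(S)$ with $p\le D(b)$, and $a\le_r b\iff a=bq$ for some $q\in\mathbf P(S)$ with $q\le R(b)$; its left and right restrictions are ${}_p\lfloor a=pa$ ($p\le D(a)$) and $a\rfloor_q=aq$ ($q\le R(a)$).
   Context: A DRC-semigroup is $(S,\cdot,D,R)$, $(S,\cdot)$ a semigroup, $D,R:S\to S$ with, for all $a,b$: $D(a)a=a$, $aR(a)=a$; $D(ab)=D(aD(b))$, $R(ab)=R(R(a)b)$; $D(ab)=D(a)D(ab)D(a)$, $R(ab)=R(b)R(ab)R(b)$; $R(D(a))=D(a)$, $D(R(a))=R(a)$. Projections: $\mathbf P(S)=\{D(a):a\in S\}$, partially ordered by $p\le q\iff p=pq=qp$. The small category $\mathcal C(S)$ has morphism set $S$, object (identity) set $\mathbf P(S)$, domain $\mathbf d(a)=D(a)$, codomain $\mathbf r(a)=R(a)$, and composition $a\circ b=ab$ defined when $R(a)=D(b)$. A small category is identified with its morphisms, and objects with identities ($v\mathcal C$); $a\circ b$ is defined iff $\mathbf r(a)=\mathbf d(b)$. A left-ordered category is $(\mathcal C,\le)$ with a partial order such that: $a\le b\Rightarrow\mathbf d(a)\le\mathbf d(b)$, $\mathbf r(a)\le\mathbf r(b)$; if $a\le b$, $c\le c'$, $\mathbf r(a)=\mathbf d(c)$, $\mathbf r(b)=\mathbf d(c')$ then $a\circ c\le b\circ c'$; for every object $p\le\mathbf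 d(a)$ there is a unique $u\le a$ with $\mathbf d(u)=p$ (the left restriction ${}_p\lfloor a$). A right-ordered category is defined dually (unique $v\le a$ with $\mathbf r(v)=q$ for each object $q\le\mathbf r(a)$, denoted $a\rfloor_q$). A biordered category is $(\mathcal C,\le_l,\le_r)$ with $(\mathcal C,\le_l)$ left-ordered, $(\mathcal C,\le_r)$ right-ordered, and $\le_l,\le_r$ restricting to the same order on objects. *)

Record DRC_semigroup (S : Type) (mul : S -> S -> S) (D R : S -> S) : Prop := {
  drc_assoc : forall a b c, mul a (mul b c) = mul (mul a b) c;
  drc_D_left : forall a, mul (D a) a = a;
  drc_R_right : forall a, mul a (R a) = a;
  drc_D_mul : forall a b, D (mul a b) = D (mul a (D b));
  drc_R_mul : forall a b, R (mul a b) = R (mul (R a) b);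
  drc_D_sand : forall a b, D (mul a b) = mul (mul (D a) (D (mul a b))) (D a);
  drc_R_sand : forall a b, R (mul a b) = mul (mul (R b) (R (mul a b))) (R b);
  drc_RD : forall a, R (D a) = D a;
  drc_DR : forall a, D (R a) = R a
}.

Definition proj {S : Type} (D : S -> S) (p : S) : Prop := exists a, p = D a.
Definition proj_le {S : Type} (mul : S -> S -> S) (p q : S) : Prop :=
  p = mul p q /\ p = mul q p.

Definition drc_le_l {S : Type} (mul : S -> S -> S) (D : S -> S) (a b : S) : Prop :=
  exists p, proj D p /\ proj_le mul p (D b) /\ a = mul p b.
Definition drc_le_r {S : Type} (mul : S -> S -> S) (D R : S -> S) (a b : S) : Prop :=
  exists q, proj D q /\ proj_le mul q (R b) /\ a = mul b q.

(** * Small categories, identified with their morphisms.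
    [d], [r] : domain and codomain (valued in identities),
    [comp a b] : composite a∘b (first a, then b), meaningful when r a = d b. *)
Definition is_obj {M : Type} (d r : M -> M) (e : M) : Prop := d e = e /\ r e = e.

Definition is_category {M : Type} (d r : M -> M) (comp : M -> M -> M) : Prop :=
  (forall a, is_obj d r (d a) /\ is_obj d r (r a)) /\
  (forall a b, r a = d b -> d (comp a b) = d a /\ r (comp a b) = r b) /\
  (forall a, comp (d a) a = a /\ comp a (r a) = a) /\
  (forall a b c, r a = d b -> r b = d c -> comp a (comp b c) = comp (comp a b) c).

Definition is_partial_order {M : Type} (le : M -> M -> Prop) : Prop :=
  (forall a, le a a) /\
  (forall a b, le a b -> le b a -> a = b) /\
  (forall a b c, le a b -> le b c -> le a c).

Definition left_ordered {M : Type} (d r : M -> M) (comp : M -> M -> M)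
    (le : M -> M -> Prop) : Prop :=
  is_category d r comp /\ is_partial_order le /\
  (forall a b, le a b -> le (d a) (d b) /\ le (r a) (r b)) /\
  (forall a b c c', le a b -> le c c' -> r a = d c -> r b = d c' ->
      le (comp a c) (comp b c')) /\
  (forall a p, is_obj d r p -> le p (d a) ->
      exists u, (le u a /\ d u = p) /\ forall u', le u' a -> d u' = p -> u' = u).

Definition right_ordered {M : Type} (d r : M -> M) (comp : M -> M -> M)
    (le : M -> M -> Prop) : Prop :=
  is_category d r comp /\ is_partial_order le /\
  (forall a b, le a b -> le (d a) (d b) /\ le (r a) (r b)) /\
  (forall a b c c', le a b -> le c c' -> r a = d c -> r b = d c' ->
      le (comp a c) (comp b c')) /\
  (forall a q, is_obj d r q -> le q (r a) ->
      exists v, (le v a /\ r v = q) /\ forall v', le v' a -> r v' = q -> v' = v).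

Definition biordered {M : Type} (d r : M -> M) (comp : M -> M -> M)
    (lel ler : M -> M -> Prop) : Prop :=
  left_ordered d r comp lel /\ right_ordered d r comp ler /\
  (forall p q, is_obj d r p -> is_obj d r q -> (lel p q <-> ler p q)).

(** The witness of [a <=_l b] is forced: if [a = p b] with [p <= D(b)], then
    [D(a) = D(p D(b)) = D(p) = p].  Hence [a <=_l b] iff [a = D(a) b] with
    [D(a) <= D(b)], which gives antisymmetry, transitivity and uniqueness of
    left restrictions at once.  Everything about [<=_r] is the same statement
    for the dual DRC-semigroup [(S, fun a b => b a, R, D)]. *)
From Stdlib Require Import Setoid.

Arguments drc_assoc {S mul D R}.
Arguments drc_D_left {S mul D R}.
Arguments drc_R_right {S mul D R}.
Arguments drc_D_mul {S mul D R}.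
Arguments drc_R_mul {S mul D R}.
Arguments drc_D_sand {S mul D R}.
Arguments drc_R_sand {S mul D R}.
Arguments drc_RD {S mul D R}.
Arguments drc_DR {S mul D R}.

Section LeftOrder.

Variables (S : Type) (mul : S -> S -> S) (D R : S -> S).
Hypothesis HS : DRC_semigroup S mul D R.

Local Infix "*" := mul.

Lemma D_idem a : D (D a) = D a.
Proof. rewrite <- (drc_RD HS a) at 1. rewrite (drc_DR HS). apply (drc_RD HS). Qed.

Lemma R_idem a : R (R a) = R a.
Proof. rewrite <- (drc_DR HS a) at 1. rewrite (drc_RD HS). apply (drc_DR HS). Qed.

Lemma proj_D a : proj D (D a).
Proof. exists a; reflexivity. Qed.

Lemma proj_R a : proj D (R a).
Proof. exists (R a); symmetry; apply (drc_DR HS). Qed.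

Lemma proj_D_fix p : proj D p -> D p = p.
Proof. intros [a ->]; apply D_idem. Qed.

Lemma proj_R_fix p : proj D p -> R p = p.
Proof. intros [a ->]; apply (drc_RD HS). Qed.

Lemma proj_idem p : proj D p -> p * p = p.
Proof. intros Hp. rewrite <- (proj_R_fix p Hp) at 2. apply (drc_R_right HS). Qed.

Lemma proj_le_refl p : proj D p -> proj_le mul p p.
Proof. intros Hp. split; symmetry; apply proj_idem, Hp. Qed.

Lemma proj_le_antisym p q : proj_le mul p q -> proj_le mul q p -> p = q.
Proof. intros [Hpq _] [_ Hqp]; congruence. Qed.

Lemma proj_le_trans p q r :
  proj_le mul p q -> proj_le mul q r -> proj_le mul p r.
Proof.
  intros [Hpq Hqp] [Hqr Hrq]. split.
  - transitivity (p * (q * r)); [rewrite <- Hqr; exact Hpq|].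
    rewrite (drc_assoc HS), <- Hpq; reflexivity.
  - transitivity ((r * q) * p); [rewrite <- Hrq; exact Hqp|].
    rewrite <- (drc_assoc HS), <- Hqp; reflexivity.
Qed.

Lemma proj_le_R_mul a b : proj_le mul (R (a * b)) (R b).
Proof.
  assert (Hsand := drc_R_sand HS a b).
  assert (Hidem := proj_idem (R b) (proj_R b)).
  split; rewrite Hsand at 2.
  - rewrite <- (drc_assoc HS), Hidem. exact Hsand.
  - rewrite !(drc_assoc HS), Hidem. exact Hsand.
Qed.

Lemma D_restrict p b : proj D p -> proj_le mul p (D b) -> D (p * b) = p.
Proof.
  intros Hp [Hpb _]. rewrite (drc_D_mul HS), <- Hpb. apply proj_D_fix, Hp.
Qed.

Lemma D_comp b c : R b = D c -> D (b * c) = D b.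
Proof. intros E. rewrite (drc_D_mul HS), <- E, (drc_R_right HS). reflexivity. Qed.

Lemma R_comp b c : R b = D c -> R (b * c) = R c.
Proof. intros E. rewrite (drc_R_mul HS), E, (drc_D_left HS). reflexivity. Qed.

Lemma drc_is_category : is_category D R mul.
Proof.
  split; [|split; [|split]].
  - intro a. repeat split.
    + apply D_idem.
    + apply (drc_RD HS).
    + apply (drc_DR HS).
    + apply R_idem.
  - intros a b E. split; [apply D_comp | apply R_comp]; exact E.
  - intro a. split; [apply (drc_D_left HS) | apply (drc_R_right HS)].
  - intros a b c _ _. apply (drc_assoc HS).
Qed.

Lemma le_l_proj p q :
  proj D q -> (drc_le_l mul D p q <-> proj D p /\ proj_le mul p q).
Proof.
  intros Hq. unfold drc_le_l. rewrite (proj_D_fix q Hq). split.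
  - intros [p' [Hp' [Hle ->]]]. rewrite <- (proj1 Hle). split; assumption.
  - intros [Hp Hle]. exists p. split; [exact Hp | split; [exact Hle | exact (proj1 Hle)]].
Qed.

Lemma le_l_refl a : drc_le_l mul D a a.
Proof.
  exists (D a).
  split; [apply proj_D | split; [apply proj_le_refl, proj_D |]].
  symmetry; apply (drc_D_left HS).
Qed.

Lemma le_l_antisym a b : drc_le_l mul D a b -> drc_le_l mul D b a -> a = b.
Proof.
  intros [p [Hp [Hpb ->]]] [q [Hq [Hqa Eb]]].
  rewrite (D_restrict p b Hp Hpb) in Hqa.
  assert (Hq_eq : D b = q).
  { rewrite Eb at 1. apply D_restrict; [exact Hq|].
    rewrite (D_restrict p b Hp Hpb). exact Hqa. }
  rewrite Hq_eq in Hpb.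
  rewrite (proj_le_antisym p q Hpb Hqa), <- Hq_eq. apply (drc_D_left HS).
Qed.

Lemma le_l_trans a b c :
  drc_le_l mul D a b -> drc_le_l mul D b c -> drc_le_l mul D a c.
Proof.
  intros [p [Hp [Hpb ->]]] [q [Hq [Hqc ->]]].
  rewrite (D_restrict q c Hq Hqc) in Hpb.
  exists p. split; [exact Hp | split; [exact (proj_le_trans _ _ _ Hpb Hqc) |]].
  rewrite (drc_assoc HS), <- (proj1 Hpb). reflexivity.
Qed.

Lemma le_l_D a b : drc_le_l mul D a b -> drc_le_l mul D (D a) (D b).
Proof.
  intros [p [Hp [Hpb ->]]]. rewrite (D_restrict p b Hp Hpb).
  apply le_l_proj; [apply proj_D | split; assumption].
Qed.

Lemma le_l_R a b : drc_le_l mul D a b -> drc_le_l mul D (R a) (R b).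
Proof.
  intros [p [_ [_ ->]]].
  apply le_l_proj; [apply proj_R | split; [apply proj_R | apply proj_le_R_mul]].
Qed.

Lemma le_l_comp a b c c' :
  drc_le_l mul D a b -> drc_le_l mul D c c' -> R a = D c -> R b = D c' ->
  drc_le_l mul D (a * c) (b * c').
Proof.
  intros [p [Hp [Hpb ->]]] [q [Hq [Hqc ->]]] Hac Hbc.
  rewrite (D_restrict q c' Hq Hqc) in Hac.
  exists p. rewrite (D_comp b c' Hbc).
  split; [exact Hp | split; [exact Hpb |]].
  rewrite <- Hac, !(drc_assoc HS), (drc_R_right HS). reflexivity.
Qed.

Lemma left_restriction a p :
  proj D p -> proj_le mul p (D a) ->
  drc_le_l mul D (p * a) a /\ D (p * a) = p /\
  (forall u, drc_le_l mul D u a -> D u = p -> u = p * a).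
Proof.
  intros Hp Hpa. split; [|split].
  - exists p. auto.
  - apply D_restrict; assumption.
  - intros u [r [Hr [Hra ->]]] Hd.
    rewrite (D_restrict r a Hr Hra) in Hd. subst r. reflexivity.
Qed.

Lemma drc_left_ordered : left_ordered D R mul (drc_le_l mul D).
Proof.
  split; [apply drc_is_category|].
  split; [split; [exact le_l_refl | split; [exact le_l_antisym | exact le_l_trans]]|].
  split; [intros a b H; split; [apply le_l_D | apply le_l_R]; exact H|].
  split; [exact le_l_comp|].
  intros a p _ Hpa.
  apply le_l_proj in Hpa as [Hp Hle]; [|apply proj_D].
  destruct (left_restriction a p Hp Hle) as (Hu & Hdu & Huniq).
  exists (p * a). auto.
Qed.

End LeftOrder.

Lemma is_category_dual {M : Type} (d r : M -> M) (comp : M -> M -> M) :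
  is_category r d (fun a b => comp b a) -> is_category d r comp.
Proof.
  unfold is_category, is_obj.
  intros [Hobj [Hcomp [Hid Hassoc]]]. split; [|split; [|split]].
  - intro a. destruct (Hobj a) as [[? ?] [? ?]]. repeat split; assumption.
  - intros a b E. destruct (Hcomp b a (eq_sym E)). split; assumption.
  - intro a. destruct (Hid a). split; assumption.
  - intros a b c E1 E2. symmetry. apply (Hassoc c b a); symmetry; assumption.
Qed.

Lemma right_ordered_of_dual {M : Type} (d r : M -> M) (comp : M -> M -> M)
    (le le' : M -> M -> Prop) :
  (forall a b, le a b <-> le' a b) ->
  left_ordered r d (fun a b => comp b a) le' -> right_ordered d r comp le.
Proof.
  intros Hle. unfold left_ordered, right_ordered, is_partial_order, is_obj.
  setoid_rewrite Hle.
  intros [Hcat [Hpo [Hmono [Hcomp Hres]]]].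
  split; [apply is_category_dual, Hcat|].
  split; [exact Hpo|].
  split; [intros a b H; destruct (Hmono a b H); split; assumption|].
  split.
  - intros a b c c' Hab Hcc' E E'. exact (Hcomp c c' a b Hcc' Hab (eq_sym E) (eq_sym E')).
  - intros a q [Hq1 Hq2]. apply Hres. split; assumption.
Qed.

Section Duality.

Variables (S : Type) (mul : S -> S -> S) (D R : S -> S).
Hypothesis HS : DRC_semigroup S mul D R.

Local Notation mul_op := (fun a b => mul b a).

Lemma DRC_semigroup_dual : DRC_semigroup S mul_op R D.
Proof.
  destruct HS as [assoc DL RRt Dm Rm Ds Rs RD DR].
  constructor; intros; cbv beta.
  - symmetry; apply assoc.
  - apply RRt.
  - apply DL.
  - apply Rm.
  - apply Dm.
  - rewrite assoc. apply Rs.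
  - rewrite assoc. apply Ds.
  - apply DR.
  - apply RD.
Qed.

Lemma proj_R_iff p : proj R p <-> proj D p.
Proof.
  split; intros [a ->].
  - exists (R a). symmetry; apply (drc_DR HS).
  - exists (D a). symmetry; apply (drc_RD HS).
Qed.

Lemma proj_le_op p q : proj_le mul_op p q <-> proj_le mul p q.
Proof. split; intros [H1 H2]; split; assumption. Qed.

Lemma le_r_dual a b : drc_le_r mul D R a b <-> drc_le_l mul_op R a b.
Proof.
  unfold drc_le_r, drc_le_l. setoid_rewrite proj_R_iff. setoid_rewrite proj_le_op.
  reflexivity.
Qed.

Lemma drc_right_ordered : right_ordered D R mul (drc_le_r mul D R).
Proof.
  apply (right_ordered_of_dual D R mul _ _ le_r_dual).
  apply drc_left_ordered, DRC_semigroup_dual.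
Qed.

Lemma le_r_proj p q :
  proj D q -> (drc_le_r mul D R p q <-> proj D p /\ proj_le mul p q).
Proof.
  intros Hq. rewrite le_r_dual, le_l_proj, proj_R_iff, proj_le_op.
  - reflexivity.
  - apply DRC_semigroup_dual.
  - apply proj_R_iff, Hq.
Qed.

Lemma right_restriction a q :
  proj D q -> proj_le mul q (R a) ->
  drc_le_r mul D R (mul a q) a /\ R (mul a q) = q /\
  (forall v, drc_le_r mul D R v a -> R v = q -> v = mul a q).
Proof.
  intros Hq Hqa. setoid_rewrite le_r_dual.
  apply (left_restriction _ _ R D DRC_semigroup_dual).
  - apply proj_R_iff, Hq.
  - apply proj_le_op, Hqa.
Qed.

End Duality.

Theorem proposition3p10 (S : Type) (mul : S -> S -> S) (D R : S -> S)
    (HS : DRC_semigroup S mul D R) :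
  biordered D R mul (drc_le_l mul D) (drc_le_r mul D R) /\
  (* left restriction: for p in P(S) with p <= D(a), pa is the unique u <=_l a with D(u) = p *)
  (forall a p, proj D p -> proj_le mul p (D a) ->
     drc_le_l mul D (mul p a) a /\ D (mul p a) = p /\
     (forall u, drc_le_l mul D u a -> D u = p -> u = mul p a)) /\
  (* right restriction: for q in P(S) with q <= R(a), aq is the unique v <=_r a with R(v) = q *)
  (forall a q, proj D q -> proj_le mul q (R a) ->
     drc_le_r mul D R (mul a q) a /\ R (mul a q) = q /\
     (forall v, drc_le_r mul D R v a -> R v = q -> v = mul a q)).
Proof.
  split; [split; [|split] | split].
  - apply drc_left_ordered, HS.
  - apply drc_right_ordered, HS.
  - intros p q _ [Dq _].
    assert (Hq : proj D q) by (exists q; symmetry; exact Dq).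
    rewrite (le_l_proj _ _ _ _ HS p q Hq), (le_r_proj _ _ _ _ HS p q Hq).
    reflexivity.
  - exact (left_restriction _ _ _ _ HS).
  - exact (right_restriction _ _ _ _ HS).
Qed.
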